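(* Let $\kappa\geqslant12$ be even, $a(n)$ the Fourier coefficients of a holomorphic cusp form of weight $\kappa$ for $SL_2(\mathbb{Z})$, let $T\geqslant10$ and $y=T^{3/4}$. For positive integers $n,m,k,\ell$ set $g(n,m,k,\ell)=\dfrac{a(n)a(m)a(k)a(\ell)}{(nmk\ell)^{\kappa/2+1/4}}$ if $n,m,k,\ell\leqslant y$ and $g(n,m,k,\ell)=0$ otherwise. Define \[ S_4(x)=\frac18\sum_{n,m,k,\ell\leqslant y} g(n,m,k,\ell)\,x^{2\kappa-1}\cos\big(4\pi(\sqrt n+\sqrt m+\sqrt k+\sqrt\ell)\sqrt x-\pi\big). \] Then for every $\varepsilon>0$, \[ \int_T^{2T}S_4(x)\,\mathrm{d}x\ll T^{2\kappa-1/2+\varepsilon}y^{1/2}= T^{2\kappa-1/8+\varepsilon}, \] with the implied constant depending on $\varepsilon$ and the cusp form.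
   Context: Sums are over positive integers $n,m,k,\ell$. The coefficients $a(n)$ are real and satisfy Deligne's bound $a(n)\ll n^{(\kappa-1)/2}d(n)$, where $d(n)$ is the number of divisors of $n$. *)

From Stdlib Require Import Reals Lra Lia ZArith Arith List.
Open Scope R_scope.

Definition ndiv (n : nat) : nat :=
  length (filter (fun k => Nat.eqb (n mod k) 0) (seq 1 n)).

Definition sum_le (y : R) (f : nat -> R) : R :=
  fold_right Rplus 0
    (map (fun n => if Rle_dec (INR n) y then f n else 0)
         (seq 1 (Z.to_nat (up y)))).

Definition deligne_bound (kappa : nat) (a : nat -> R) : Prop :=
  exists C : R, 0 < C /\ forall n : nat, (1 <= n)%nat ->
    Rabs (a n) <= C * Rpower (INR n) ((INR kappa - 1) / 2) * INR (ndiv n).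

Definition ycut (T : R) : R := Rpower T (3 / 4).

(* g(n,m,k,l) for n,m,k,l <= y (only used inside the sum over n,m,k,l <= y) *)
Definition gcoef (kappa : nat) (a : nat -> R) (n m k l : nat) : R :=
  a n * a m * a k * a l / Rpower (INR (n * m * k * l)) (INR kappa / 2 + 1 / 4).

Definition S4 (kappa : nat) (a : nat -> R) (T : R) (x : R) : R :=
  / 8 * sum_le (ycut T) (fun n => sum_le (ycut T) (fun m =>
          sum_le (ycut T) (fun k => sum_le (ycut T) (fun l =>
            gcoef kappa a n m k l * x ^ (2 * kappa - 1) *
            cos (4 * PI * (sqrt (INR n) + sqrt (INR m) + sqrt (INR k) + sqrt (INR l))
                 * sqrt x - PI))))).

From Stdlib Require Import Reals Lra Lia List.
From Coquelicot Require Import Coquelicot.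
Open Scope R_scope.

(* Each term of S_4 is an oscillatory integral: with c = 4 pi (sqrt n + sqrt m + sqrt k + sqrt l),
   x^N cos(c sqrt x - pi) is the derivative of (2/c) x^N sqrt x sin(c sqrt x - pi) up to a term
   that is smaller by a factor 1/sqrt x, so its integral over [T, 2T] is O(T^(N+1/2) / c)
   (first derivative test).  Since c >= (nmkl)^(1/8), the resulting bound factorizes as
   T^(2 kappa - 1/2) (sum_(n <= y) |a(n)| n^(-kappa/2 - 3/8))^4, and Deligne's bound reduces the
   inner sum to sum_(n <= y) d(n) n^(-7/8) <= y^(1/8 + d) sum_n d(n) n^(-1-d) <= y^(1/8 + d) (1 + 1/d)^2.
   The fourth power is y^(1/2 + 4d) = y^(1/2) T^(3d). *)

(** * Finite sums *)

Definition lsum (l : list nat) (f : nat -> R) : R := fold_right Rplus 0 (map f l).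

Lemma lsum_nil f : lsum nil f = 0.
Proof. reflexivity. Qed.

Lemma lsum_cons n l f : lsum (n :: l) f = f n + lsum l f.
Proof. reflexivity. Qed.

Lemma lsum_app l1 l2 f : lsum (l1 ++ l2) f = lsum l1 f + lsum l2 f.
Proof. induction l1; simpl; rewrite ?lsum_nil, ?lsum_cons, ?IHl1; lra. Qed.

Lemma lsum_plus l f g : lsum l (fun n => f n + g n) = lsum l f + lsum l g.
Proof. induction l; rewrite ?lsum_nil, ?lsum_cons, ?IHl; lra. Qed.

Lemma lsum_scal_r l c f : lsum l (fun n => f n * c) = lsum l f * c.
Proof. induction l; rewrite ?lsum_nil, ?lsum_cons, ?IHl; lra. Qed.

Lemma lsum_ext l f g : (forall n, In n l -> f n = g n) -> lsum l f = lsum l g.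
Proof.
  induction l as [|n l IH]; intros H; rewrite ?lsum_cons; auto.
  rewrite (H n), IH; simpl; auto; intros; apply H; simpl; auto.
Qed.

Lemma lsum_le l f g : (forall n, In n l -> f n <= g n) -> lsum l f <= lsum l g.
Proof.
  induction l as [|n l IH]; intros H; rewrite ?lsum_nil, ?lsum_cons; [lra|].
  apply Rplus_le_compat; [apply H | apply IH; intros; apply H]; simpl; auto.
Qed.

Lemma lsum_comm l1 l2 F :
  lsum l1 (fun i => lsum l2 (fun j => F i j)) = lsum l2 (fun j => lsum l1 (fun i => F i j)).
Proof.
  induction l1 as [|i l1 IH].
  - rewrite lsum_nil; induction l2 as [|j l2 IH]; rewrite ?lsum_cons, ?lsum_nil, <- ?IH; lra.
  - rewrite lsum_cons, IH, <- lsum_plus. apply lsum_ext; intros; rewrite lsum_cons; lra.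
Qed.

Lemma sum_le_lsum y f :
  sum_le y f = lsum (seq 1 (Z.to_nat (up y))) (fun n => if Rle_dec (INR n) y then f n else 0).
Proof. reflexivity. Qed.

Lemma sum_le_ext y f g : (forall n, f n = g n) -> sum_le y f = sum_le y g.
Proof. intros H; rewrite !sum_le_lsum; apply lsum_ext; intros n _; rewrite H; auto. Qed.

Lemma sum_le_le y f g : (forall n, (1 <= n)%nat -> INR n <= y -> f n <= g n) ->
  sum_le y f <= sum_le y g.
Proof.
  intros H; rewrite !sum_le_lsum; apply lsum_le; intros n Hn; apply in_seq in Hn.
  destruct (Rle_dec (INR n) y); [apply H; auto; lia | lra].
Qed.

Lemma sum_le_scal_r y f c : sum_le y (fun n => f n * c) = sum_le y f * c.
Proof.
  rewrite !sum_le_lsum, <- lsum_scal_r; apply lsum_ext; intros.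
  destruct (Rle_dec (INR n) y); lra.
Qed.

Lemma sum_le_scal_l y f c : sum_le y (fun n => c * f n) = c * sum_le y f.
Proof. rewrite Rmult_comm, <- sum_le_scal_r; apply sum_le_ext; intros; ring. Qed.

Lemma sum_le_ge0 y f : (forall n, (1 <= n)%nat -> INR n <= y -> 0 <= f n) -> 0 <= sum_le y f.
Proof.
  intros H; apply Rle_trans with (sum_le y (fun _ => 0)); [|apply sum_le_le; auto].
  rewrite (sum_le_ext y _ (fun n => 0 * 0)), sum_le_scal_l by (intros; ring); lra.
Qed.

Lemma sum_le_pow4 y X (v : nat -> R) :
  sum_le y (fun n => sum_le y (fun m => sum_le y (fun k => sum_le y (fun l =>
    X * (v n * v m * v k * v l))))) = X * sum_le y v ^ 4.
Proof.
  set (W := sum_le y v).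
  assert (Hfactor : forall c, sum_le y (fun n => c * v n) = c * W) by (intros; apply sum_le_scal_l).
  rewrite (sum_le_ext _ _ (fun n => X * v n * W * W * W)); [rewrite !sum_le_scal_r, Hfactor; ring|].
  intros n; rewrite (sum_le_ext _ _ (fun m => X * v n * v m * W * W)), !sum_le_scal_r, Hfactor; [ring|].
  intros m; rewrite (sum_le_ext _ _ (fun k => X * v n * v m * v k * W)), sum_le_scal_r, Hfactor; [ring|].
  intros k; rewrite <- Hfactor; apply sum_le_ext; intros; ring.
Qed.

Definition RInt_bounded (f : R -> R) (a b B : R) : Prop :=
  ex_RInt f a b /\ Rabs (RInt f a b) <= B.

Lemma RInt_bounded_ext f g a b B :
  (forall x, f x = g x) -> RInt_bounded f a b B -> RInt_bounded g a b B.
Proof.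
  intros Hfg [Hex Hle]; split.
  - exact (ex_RInt_ext f g a b (fun x _ => Hfg x) Hex).
  - rewrite <- (RInt_ext f g) by (intros; apply Hfg); exact Hle.
Qed.

Lemma RInt_bounded_zero a b : RInt_bounded (fun _ => 0) a b 0.
Proof.
  split; [apply ex_RInt_const|].
  rewrite RInt_const; unfold scal; simpl; unfold mult; simpl.
  rewrite Rmult_0_r, Rabs_R0; lra.
Qed.

Lemma RInt_bounded_plus f g a b Bf Bg :
  RInt_bounded f a b Bf -> RInt_bounded g a b Bg ->
  RInt_bounded (fun x => f x + g x) a b (Bf + Bg).
Proof.
  intros [Ef Hf] [Eg Hg]; split.
  - exact (@ex_RInt_plus R_NormedModule f g a b Ef Eg).
  - change (fun x => f x + g x) with (fun x => plus (f x) (g x)).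
    rewrite (@RInt_plus R_CompleteNormedModule) by assumption.
    eapply Rle_trans; [apply Rabs_triang | lra].
Qed.

Lemma RInt_bounded_scal c f a b B :
  RInt_bounded f a b B -> RInt_bounded (fun x => c * f x) a b (Rabs c * B).
Proof.
  intros [Ef Hf]; split.
  - exact (@ex_RInt_scal R_NormedModule f a b c Ef).
  - change (fun x => c * f x) with (fun x => scal c (f x)).
    rewrite (@RInt_scal R_CompleteNormedModule) by assumption.
    rewrite Rabs_mult; apply Rmult_le_compat_l; [apply Rabs_pos | exact Hf].
Qed.

Lemma RInt_bounded_lsum l a b (F : nat -> R -> R) (B : nat -> R) :
  (forall n, In n l -> RInt_bounded (F n) a b (B n)) ->
  RInt_bounded (fun x => lsum l (fun n => F n x)) a b (lsum l B).
Proof.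
  induction l as [|n l IH]; intros H.
  - exact (RInt_bounded_zero a b).
  - apply (RInt_bounded_plus (F n) (fun x => lsum l (fun n => F n x)));
      [apply H | apply IH; intros; apply H]; simpl; auto.
Qed.

Lemma RInt_bounded_sum_le y a b (F : nat -> R -> R) (B : nat -> R) :
  (forall n, (1 <= n)%nat -> INR n <= y -> RInt_bounded (F n) a b (B n)) ->
  RInt_bounded (fun x => sum_le y (fun n => F n x)) a b (sum_le y B).
Proof.
  intros H; rewrite sum_le_lsum.
  apply (RInt_bounded_lsum _ a b (fun n x => if Rle_dec (INR n) y then F n x else 0)).
  intros n Hn; apply in_seq in Hn.
  destruct (Rle_dec (INR n) y); [apply H; auto; lia | apply RInt_bounded_zero].
Qed.

Lemma RInt_bounded_weaken f a b B B' :
  B <= B' -> RInt_bounded f a b B -> RInt_bounded f a b B'.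
Proof. intros HB [Ef Hf]; split; [exact Ef | lra]. Qed.

(** * The oscillatory integral *)

Lemma Rabs_pow_sqrt_sin_le n t X th : 0 <= t <= X ->
  Rabs (t ^ n * sqrt t * sin th) <= X ^ n * sqrt X.
Proof.
  intros Ht.
  rewrite !Rabs_mult, (Rabs_pos_eq (t ^ n)), (Rabs_pos_eq (sqrt t)) by
    (apply pow_le || apply sqrt_pos; lra).
  assert (Hsin : Rabs (sin th) <= 1) by (apply Rabs_le, SIN_bound).
  assert (Hpow : t ^ n <= X ^ n) by (apply pow_incr; lra).
  assert (Hsqrt : sqrt t <= sqrt X) by (apply sqrt_le_1_alt; lra).
  assert (0 <= t ^ n * sqrt t) by (apply Rmult_le_pos; [apply pow_le | apply sqrt_pos]; lra).
  apply Rle_trans with (t ^ n * sqrt t).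
  - rewrite <- (Rmult_1_r (t ^ n * sqrt t)) at 2.
    apply Rmult_le_compat_l; auto.
  - apply Rmult_le_compat; auto; [apply pow_le | apply sqrt_pos]; lra.
Qed.

Lemma ex_RInt_continuous_pos (f : R -> R) T : 0 < T -> (forall x, 0 < x -> continuous f x) ->
  ex_RInt f T (2 * T).
Proof.
  intros HT Hf; apply (@ex_RInt_continuous R_CompleteNormedModule).
  rewrite Rmin_left by lra; intros; apply Hf; lra.
Qed.

Section OscillatoryIntegral.

Variables (N : nat) (c phi : R).
Hypotheses (HN : (1 <= N)%nat) (Hc : 0 < c).

Let osc x := x ^ N * cos (c * sqrt x - phi).
Let G x := 2 / c * (x ^ N * sqrt x * sin (c * sqrt x - phi)).
Let h x := (2 * INR N + 1) / c * (x ^ (N - 1) * sqrt x * sin (c * sqrt x - phi)).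

Lemma is_derive_osc_primitive x : 0 < x -> is_derive G x (osc x + h x).
Proof.
  intros Hx; unfold G, osc, h; auto_derive; auto.
  destruct N as [|n]; [lia|].
  replace (S n - 1)%nat with n by lia; simpl pred; rewrite S_INR.
  assert (Hs : 0 < sqrt x) by (apply sqrt_lt_R0; auto).
  assert (Hxx : sqrt x * sqrt x = x) by (apply sqrt_sqrt; lra).
  simpl pow; unfold Rminus.
  set (s := sqrt x) in *; set (co := cos _); set (si := sin _).
  rewrite <- Hxx; field; split; lra.
Qed.

Lemma continuous_osc x : 0 < x -> continuous osc x.
Proof.
  intros Hx; apply (@ex_derive_continuous R_AbsRing R_NormedModule).
  unfold osc; auto_derive; auto.
Qed.

Lemma continuous_osc_remainder x : 0 < x -> continuous h x.
Proof.
  intros Hx; apply (@ex_derive_continuous R_AbsRing R_NormedModule).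
  unfold h; auto_derive; auto.
Qed.

Lemma RInt_osc_by_parts T : 0 < T ->
  RInt osc T (2 * T) = G (2 * T) - G T - RInt h T (2 * T).
Proof.
  intros HT.
  assert (Hmin : Rmin T (2 * T) = T) by (apply Rmin_left; lra).
  assert (IG : is_RInt (fun x => osc x + h x) T (2 * T) (G (2 * T) - G T)).
  { apply (is_RInt_derive G); rewrite Hmin; intros x Hx.
    - apply is_derive_osc_primitive; lra.
    - apply (@continuous_plus R_UniformSpace R_AbsRing R_NormedModule osc h);
        [apply continuous_osc | apply continuous_osc_remainder]; lra. }
  rewrite <- (is_RInt_unique _ _ _ _ IG).
  rewrite <- (@RInt_minus R_CompleteNormedModule);
    [| eexists; exact IG | apply ex_RInt_continuous_pos; auto using continuous_osc_remainder].
  apply RInt_ext; intros; unfold minus, plus, opp; simpl; ring.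
Qed.

Lemma RInt_pow_cos_sqrt_bounded T : 0 < T ->
  RInt_bounded (fun x => x ^ N * cos (c * sqrt x - phi)) T (2 * T)
    ((INR N + 5) / c * ((2 * T) ^ N * sqrt (2 * T))).
Proof.
  intros HT.
  set (X := (2 * T) ^ N * sqrt (2 * T)).
  assert (HX : 0 <= X) by (apply Rmult_le_pos; [apply pow_le | apply sqrt_pos]; lra).
  assert (HG : forall x, 0 < x <= 2 * T -> Rabs (G x) <= 2 / c * X).
  { intros x Hx; unfold G.
    rewrite Rabs_mult, (Rabs_pos_eq (2 / c)) by (apply Rdiv_le_0_compat; lra).
    apply Rmult_le_compat_l; [apply Rdiv_le_0_compat; lra|].
    apply Rabs_pow_sqrt_sin_le; lra. }
  assert (Hh : Rabs (RInt h T (2 * T)) <= (INR N + 1 / 2) / c * X).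
  { assert (HhN : 0 <= (2 * INR N + 1) / c) by (pose proof (pos_INR N); apply Rdiv_le_0_compat; lra).
    eapply Rle_trans.
    - apply (abs_RInt_le_const _ _ _ ((2 * INR N + 1) / c * ((2 * T) ^ (N - 1) * sqrt (2 * T))));
        [lra | apply ex_RInt_continuous_pos; auto using continuous_osc_remainder |].
      intros t Ht; unfold h.
      rewrite Rabs_mult, (Rabs_pos_eq _ HhN).
      apply Rmult_le_compat_l; [exact HhN|].
      apply Rabs_pow_sqrt_sin_le; lra.
    - unfold X; destruct N as [|n]; [lia|].
      replace (S n - 1)%nat with n by lia; rewrite S_INR; simpl pow.
      right; field; lra. }
  split; [apply ex_RInt_continuous_pos; auto using continuous_osc|].
  change (Rabs (RInt osc T (2 * T)) <= (INR N + 5) / c * X).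
  rewrite RInt_osc_by_parts by exact HT.
  pose proof (HG (2 * T) ltac:(lra)); pose proof (HG T ltac:(lra)).
  unfold Rminus; eapply Rle_trans; [apply Rabs_triang|].
  eapply Rle_trans; [apply Rplus_le_compat_r, Rabs_triang|].
  rewrite !Rabs_Ropp.
  replace ((INR N + 5) / c * X) with (2 / c * X + 2 / c * X + (INR N + 1 / 2) / c * X + X / (2 * c))
    by (field; lra).
  assert (0 <= X / (2 * c)) by (apply Rdiv_le_0_compat; lra).
  lra.
Qed.

End OscillatoryIntegral.

(** * Divisor sums *)

Lemma Rpower_gt0 x z : 0 < Rpower x z.
Proof. apply exp_pos. Qed.

Lemma Rpower_1_l z : Rpower 1 z = 1.
Proof. unfold Rpower; rewrite ln_1, Rmult_0_r; apply exp_0. Qed.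

Lemma Rpower_INR_mult k m z : (1 <= k)%nat -> (1 <= m)%nat ->
  Rpower (INR (k * m)) z = Rpower (INR k) z * Rpower (INR m) z.
Proof.
  intros Hk Hm; rewrite mult_INR, Rpower_mult_distr; auto; apply (lt_INR 0); lia.
Qed.

Lemma ln_le_sub1 z : 0 < z -> ln z <= z - 1.
Proof. intros Hz; pose proof (exp_ineq1_le (ln z)) as H; rewrite exp_ln in H; lra. Qed.

(* A discrete form of [int_x^(x+1) t^(-1-d) dt = (x^(-d) - (x+1)^(-d)) / d]. *)
Lemma Rpower_succ_le_telescope d x : 0 < d -> 0 < x ->
  Rpower (x + 1) (- (1 + d)) <= (Rpower x (- d) - Rpower (x + 1) (- d)) / d.
Proof.
  intros Hd Hx; unfold Rpower.
  set (u := ln (x + 1) - ln x).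
  assert (Hu : / (x + 1) <= u).
  { pose proof (ln_le_sub1 (x / (x + 1)) ltac:(apply Rdiv_lt_0_compat; lra)) as H.
    unfold Rdiv in H; rewrite ln_mult, ln_Rinv in H by (try apply Rinv_0_lt_compat; lra).
    replace (x * / (x + 1) - 1) with (- / (x + 1)) in H by (field; lra).
    unfold u; lra. }
  assert (E1 : exp (- d * ln x) = exp (- d * ln (x + 1)) * exp (d * u)).
  { rewrite <- exp_plus; f_equal; unfold u; ring. }
  assert (E2 : exp (- (1 + d) * ln (x + 1)) = exp (- d * ln (x + 1)) * / (x + 1)).
  { rewrite <- (exp_ln (/ (x + 1))), <- exp_plus by (apply Rinv_0_lt_compat; lra).
    rewrite ln_Rinv by lra; f_equal; ring. }
  rewrite E1, E2.
  pose proof (exp_pos (- d * ln (x + 1))); pose proof (exp_ineq1_le (d * u)).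
  apply Rmult_le_reg_l with d; auto.
  replace (d * ((exp (- d * ln (x + 1)) * exp (d * u) - exp (- d * ln (x + 1))) / d))
    with (exp (- d * ln (x + 1)) * (exp (d * u) - 1)) by (field; lra).
  replace (d * (exp (- d * ln (x + 1)) * / (x + 1)))
    with (exp (- d * ln (x + 1)) * (d * / (x + 1))) by ring.
  apply Rmult_le_compat_l; nra.
Qed.

Lemma partial_zeta_le d N : 0 < d -> (1 <= N)%nat ->
  lsum (seq 1 N) (fun j => Rpower (INR j) (- (1 + d))) <= 1 + (1 - Rpower (INR N) (- d)) / d.
Proof.
  intros Hd HN; induction N as [|N IH]; [lia|].
  destruct (Nat.eq_dec N 0) as [->|HN0].
  - simpl; rewrite lsum_cons, lsum_nil, !Rpower_1_l.
    replace ((1 - 1) / d) with 0 by (field; lra); lra.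
  - rewrite seq_S, lsum_app, lsum_cons, lsum_nil, !S_INR.
    assert (1 <= INR N) by (apply (le_INR 1); lia).
    pose proof (IH ltac:(lia)); pose proof (Rpower_succ_le_telescope d (INR N) Hd ltac:(lra)).
    replace (1 + (1 - Rpower (INR N + 1) (- d)) / d) with
      (1 + (1 - Rpower (INR N) (- d)) / d + (Rpower (INR N) (- d) - Rpower (INR N + 1) (- d)) / d)
      by (field; lra).
    lra.
Qed.

Lemma partial_zeta_bounded d N : 0 < d ->
  lsum (seq 1 N) (fun j => Rpower (INR j) (- (1 + d))) <= 1 + / d.
Proof.
  intros Hd; assert (0 < / d) by (apply Rinv_0_lt_compat; lra).
  destruct N as [|N]; [rewrite lsum_nil; lra|].
  eapply Rle_trans; [apply partial_zeta_le; auto; lia|].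
  pose proof (Rpower_gt0 (INR (S N)) (- d)); unfold Rdiv; nra.
Qed.

Lemma lsum_multiples k s M : (1 <= k)%nat ->
  lsum (seq 1 M) (fun n => if Nat.eqb (n mod k) 0 then Rpower (INR n) (- s) else 0)
  = Rpower (INR k) (- s) * lsum (seq 1 (M / k)) (fun j => Rpower (INR j) (- s)).
Proof.
  intros Hk; induction M as [|M IH].
  - rewrite Nat.Div0.div_0_l, !lsum_nil; ring.
  - rewrite seq_S, lsum_app, lsum_cons, lsum_nil, IH.
    pose proof (Nat.div_mod_eq M k) as HM; pose proof (Nat.mod_upper_bound M k ltac:(lia)).
    set (q := (M / k)%nat) in *; set (r := (M mod k)%nat) in *.
    destruct (Nat.eq_dec (S r) k) as [Hrk|Hrk].
    + assert (E1 : (1 + M) mod k = 0%nat) by (symmetry; apply Nat.mod_unique with (S q); lia).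
      assert (E2 : (S M / k)%nat = S q) by (symmetry; apply Nat.div_unique with 0%nat; lia).
      rewrite E1, E2, seq_S, lsum_app, lsum_cons, lsum_nil; simpl Nat.eqb.
      replace (1 + M)%nat with (k * (1 + q))%nat by lia.
      rewrite Rpower_INR_mult by lia; ring.
    + assert (E1 : (1 + M) mod k = S r) by (symmetry; apply Nat.mod_unique with q; lia).
      assert (E2 : (S M / k)%nat = q) by (symmetry; apply Nat.div_unique with (S r); lia).
      rewrite E1, E2; simpl Nat.eqb; cbv iota; ring.
Qed.

Lemma INR_length_filter (p : nat -> bool) l :
  INR (length (filter p l)) = lsum l (fun k => if p k then 1 else 0).
Proof.
  induction l as [|k l IH]; [reflexivity|].
  rewrite lsum_cons; simpl; destruct (p k); simpl length; rewrite ?S_INR, IH; ring.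
Qed.

Lemma INR_ndiv_lsum n M : (1 <= n)%nat -> (n <= M)%nat ->
  INR (ndiv n) = lsum (seq 1 M) (fun k => if Nat.eqb (n mod k) 0 then 1 else 0).
Proof.
  intros H1 H2; unfold ndiv; rewrite INR_length_filter.
  replace M with (n + (M - n))%nat by lia; rewrite seq_app, lsum_app.
  rewrite (lsum_ext (seq (1 + n) (M - n)) _ (fun _ => 0 * 0)), lsum_scal_r; [ring|].
  intros k Hk; apply in_seq in Hk; rewrite Nat.mod_small by lia.
  destruct n; [lia | simpl; ring].
Qed.

(* Expanding [d(n) = sum_(k | n) 1] and summing first over the multiples of [k]
   bounds the sum by the square of the zeta-like sum. *)
Lemma lsum_ndiv_Rpower_le d M : 0 < d ->
  lsum (seq 1 M) (fun n => INR (ndiv n) * Rpower (INR n) (- (1 + d))) <= (1 + / d) ^ 2.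
Proof.
  intros Hd.
  rewrite (lsum_ext _ _ (fun n => lsum (seq 1 M)
             (fun k => if Nat.eqb (n mod k) 0 then Rpower (INR n) (- (1 + d)) else 0))).
  2:{ intros n Hn; apply in_seq in Hn; rewrite (INR_ndiv_lsum n M), <- lsum_scal_r by lia.
      apply lsum_ext; intros k _; destruct (_ =? _); ring. }
  rewrite lsum_comm.
  rewrite (lsum_ext _ _ (fun k => Rpower (INR k) (- (1 + d)) *
             lsum (seq 1 (M / k)) (fun j => Rpower (INR j) (- (1 + d))))).
  2:{ intros k Hk; apply in_seq in Hk; apply lsum_multiples; lia. }
  eapply Rle_trans.
  - apply lsum_le with (g := fun k => Rpower (INR k) (- (1 + d)) * (1 + / d)).
    intros k _; apply Rmult_le_compat_l; [left; apply Rpower_gt0 | apply partial_zeta_bounded; auto].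
  - rewrite lsum_scal_r; replace ((1 + / d) ^ 2) with ((1 + / d) * (1 + / d)) by ring; apply Rmult_le_compat_r; [|apply partial_zeta_bounded; auto].
    assert (0 < / d) by (apply Rinv_0_lt_compat; lra); lra.
Qed.

Lemma sum_le_ndiv_Rpower_le d s y : 0 < d -> s <= 1 + d ->
  sum_le y (fun n => INR (ndiv n) * Rpower (INR n) (- s)) <= Rpower y (1 + d - s) * (1 + / d) ^ 2.
Proof.
  intros Hd Hs; rewrite sum_le_lsum.
  eapply Rle_trans; [apply lsum_le with
    (g := fun n => Rpower y (1 + d - s) * (INR (ndiv n) * Rpower (INR n) (- (1 + d))))|].
  - intros n Hn; apply in_seq in Hn.
    pose proof (pos_INR (ndiv n)); pose proof (Rpower_gt0 (INR n) (- (1 + d))).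
    pose proof (Rpower_gt0 y (1 + d - s)).
    destruct (Rle_dec (INR n) y); [|apply Rmult_le_pos; nra].
    assert (1 <= INR n) by (apply (le_INR 1); lia).
    replace (Rpower (INR n) (- s)) with (Rpower (INR n) (1 + d - s) * Rpower (INR n) (- (1 + d)))
      by (rewrite <- Rpower_plus; f_equal; ring).
    assert (Rpower (INR n) (1 + d - s) <= Rpower y (1 + d - s)) by (apply Rle_Rpower_l; lra).
    rewrite Rmult_comm, Rmult_assoc, (Rmult_comm (Rpower _ _) (INR _)).
    apply Rmult_le_compat_r; auto; apply Rmult_le_pos; lra.
  - rewrite (lsum_ext _ _ (fun n => INR (ndiv n) * Rpower (INR n) (- (1 + d)) * Rpower y (1 + d - s)))
      by (intros; ring).
    rewrite lsum_scal_r, Rmult_comm; apply Rmult_le_compat_l; [left; apply Rpower_gt0|].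
    apply lsum_ndiv_Rpower_le; auto.
Qed.

Lemma Rpower_eighth_le_quarter x s : 0 < x -> sqrt x <= s -> Rpower x (1 / 8) <= Rpower s (1 / 4).
Proof.
  intros Hx Hs; assert (0 < sqrt x) by (apply sqrt_lt_R0; lra).
  replace (Rpower x (1 / 8)) with (Rpower (sqrt x) (1 / 4)); [apply Rle_Rpower_l; lra|].
  rewrite <- Rpower_sqrt, Rpower_mult by lra; f_equal; field.
Qed.

(* Each [sqrt x_i] is at most the sum [s], so [s = (s^(1/4))^4 >= prod x_i^(1/8)]. *)
Lemma inv_sum_sqrt4_le x1 x2 x3 x4 : 0 < x1 -> 0 < x2 -> 0 < x3 -> 0 < x4 ->
  / (sqrt x1 + sqrt x2 + sqrt x3 + sqrt x4) <=
  Rpower x1 (- (1 / 8)) * Rpower x2 (- (1 / 8)) * Rpower x3 (- (1 / 8)) * Rpower x4 (- (1 / 8)).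
Proof.
  intros H1 H2 H3 H4.
  pose proof (sqrt_lt_R0 x1 H1); pose proof (sqrt_lt_R0 x2 H2).
  pose proof (sqrt_lt_R0 x3 H3); pose proof (sqrt_lt_R0 x4 H4).
  set (s := sqrt x1 + sqrt x2 + sqrt x3 + sqrt x4).
  assert (Hs : 0 < s) by (unfold s; lra).
  rewrite !Rpower_Ropp, <- !Rinv_mult.
  apply Rinv_le_contravar; [repeat apply Rmult_lt_0_compat; apply Rpower_gt0|].
  replace s with (Rpower s (1 / 4) * Rpower s (1 / 4) * Rpower s (1 / 4) * Rpower s (1 / 4))
    by (rewrite <- !Rpower_plus; replace (1 / 4 + 1 / 4 + 1 / 4 + 1 / 4) with 1 by field;
        apply Rpower_1; lra).
  repeat apply Rmult_le_compat;
    try (left; apply Rpower_gt0); try (repeat apply Rmult_le_pos; left; apply Rpower_gt0);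
    apply Rpower_eighth_le_quarter; auto; unfold s; lra.
Qed.

Definition cusp_weight (kappa : nat) (a : nat -> R) (n : nat) : R :=
  Rabs (a n) * Rpower (INR n) (- (INR kappa / 2 + 3 / 8)).

Lemma cusp_weight_ge0 kappa a n : 0 <= cusp_weight kappa a n.
Proof. apply Rmult_le_pos; [apply Rabs_pos | left; apply Rpower_gt0]. Qed.

Lemma cusp_weight_le_ndiv kappa a C n :
  Rabs (a n) <= C * Rpower (INR n) ((INR kappa - 1) / 2) * INR (ndiv n) ->
  cusp_weight kappa a n <= C * (INR (ndiv n) * Rpower (INR n) (- (7 / 8))).
Proof.
  intros Ha; unfold cusp_weight.
  replace (Rpower (INR n) (- (7 / 8))) with
    (Rpower (INR n) ((INR kappa - 1) / 2) * Rpower (INR n) (- (INR kappa / 2 + 3 / 8)))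
    by (rewrite <- Rpower_plus; f_equal; field).
  apply Rle_trans with (C * Rpower (INR n) ((INR kappa - 1) / 2) * INR (ndiv n) *
                        Rpower (INR n) (- (INR kappa / 2 + 3 / 8))).
  - apply Rmult_le_compat_r; [left; apply Rpower_gt0 | exact Ha].
  - right; ring.
Qed.

Lemma Rabs_gcoef_div_le kappa a (n m k l : nat) :
  (1 <= n)%nat -> (1 <= m)%nat -> (1 <= k)%nat -> (1 <= l)%nat ->
  Rabs (gcoef kappa a n m k l) / (sqrt (INR n) + sqrt (INR m) + sqrt (INR k) + sqrt (INR l)) <=
  cusp_weight kappa a n * cusp_weight kappa a m * cusp_weight kappa a k * cusp_weight kappa a l.
Proof.
  intros Hn Hm Hk Hl.
  assert (Hpos : forall j, (1 <= j)%nat -> 0 < INR j) by (intros; apply (lt_INR 0); lia).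
  set (e := INR kappa / 2 + 1 / 4).
  assert (Hsplit : forall j, (1 <= j)%nat ->
    cusp_weight kappa a j = Rabs (a j) / Rpower (INR j) e * Rpower (INR j) (- (1 / 8))).
  { intros j Hj; unfold cusp_weight, Rdiv; rewrite <- Rpower_Ropp, Rmult_assoc, <- Rpower_plus.
    unfold e; do 2 f_equal; field. }
  rewrite !Hsplit by assumption.
  unfold gcoef; fold e.
  rewrite !Rpower_INR_mult by lia.
  pose proof (Rpower_gt0 (INR n) e); pose proof (Rpower_gt0 (INR m) e).
  pose proof (Rpower_gt0 (INR k) e); pose proof (Rpower_gt0 (INR l) e).
  set (Q := Rpower (INR n) e * Rpower (INR m) e * Rpower (INR k) e * Rpower (INR l) e).
  assert (HQ : 0 < Q) by (repeat apply Rmult_lt_0_compat; auto).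
  set (P := Rabs (a n) * Rabs (a m) * Rabs (a k) * Rabs (a l) / Q).
  replace (Rabs (a n * a m * a k * a l / Q)) with P
    by (unfold P, Rdiv; rewrite Rabs_mult, Rabs_inv, !Rabs_mult, (Rabs_pos_eq Q); lra).
  assert (HP : 0 <= P).
  { apply Rdiv_le_0_compat; [repeat apply Rmult_le_pos; apply Rabs_pos | exact HQ]. }
  pose proof (inv_sum_sqrt4_le _ _ _ _ (Hpos n Hn) (Hpos m Hm) (Hpos k Hk) (Hpos l Hl)).
  unfold Rdiv at 1; eapply Rle_trans; [apply Rmult_le_compat_l; eassumption|].
  right; unfold P, Q; field; repeat split; lra.
Qed.

Lemma RInt_S4_term_bounded kappa a N (n m k l : nat) T :
  (1 <= n)%nat -> (1 <= m)%nat -> (1 <= k)%nat -> (1 <= l)%nat -> (1 <= N)%nat -> 0 < T ->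
  RInt_bounded (fun x => gcoef kappa a n m k l * x ^ N *
      cos (4 * PI * (sqrt (INR n) + sqrt (INR m) + sqrt (INR k) + sqrt (INR l)) * sqrt x - PI))
    T (2 * T)
    ((INR N + 5) / (4 * PI) * ((2 * T) ^ N * sqrt (2 * T)) *
     (cusp_weight kappa a n * cusp_weight kappa a m * cusp_weight kappa a k * cusp_weight kappa a l)).
Proof.
  intros Hn Hm Hk Hl HN HT.
  set (s := sqrt (INR n) + sqrt (INR m) + sqrt (INR k) + sqrt (INR l)).
  assert (Hs : 0 < s).
  { assert (0 < sqrt (INR n)) by (apply sqrt_lt_R0, (lt_INR 0); lia).
    pose proof (sqrt_pos (INR m)); pose proof (sqrt_pos (INR k)); pose proof (sqrt_pos (INR l)).
    unfold s; lra. }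
  pose proof PI_RGT_0.
  set (g := gcoef kappa a n m k l).
  set (K := (INR N + 5) / (4 * PI) * ((2 * T) ^ N * sqrt (2 * T))).
  assert (HK : 0 <= K).
  { pose proof (pos_INR N); apply Rmult_le_pos; [apply Rdiv_le_0_compat; lra|].
    apply Rmult_le_pos; [apply pow_le | apply sqrt_pos]; lra. }
  apply (RInt_bounded_weaken _ _ _ (Rabs g * ((INR N + 5) / (4 * PI * s) * ((2 * T) ^ N * sqrt (2 * T))))).
  - replace (Rabs g * ((INR N + 5) / (4 * PI * s) * ((2 * T) ^ N * sqrt (2 * T))))
      with (K * (Rabs g / s)) by (unfold K; field; lra).
    apply Rmult_le_compat_l; [exact HK | apply Rabs_gcoef_div_le; auto].
  - apply (RInt_bounded_ext (fun x => g * (x ^ N * cos (4 * PI * s * sqrt x - PI)))); [intros; ring|].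
    apply RInt_bounded_scal, RInt_pow_cos_sqrt_bounded; auto.
    apply Rmult_lt_0_compat; lra.
Qed.

Lemma Rpower_pow_sqrt T N e : 0 < T ->
  Rpower T (INR N + 1 / 2 + e) = T ^ N * sqrt T * Rpower T e.
Proof.
  intros HT; replace (1 / 2) with (/ 2) by field.
  rewrite !Rpower_plus, Rpower_pow, Rpower_sqrt by lra; reflexivity.
Qed.

Lemma ycut_Rpower_pow4 T d : 0 < T ->
  Rpower (ycut T) (1 / 8 + d) ^ 4 = Rpower (ycut T) (1 / 2) * Rpower T (3 * d).
Proof.
  intros HT; unfold ycut.
  rewrite <- Rpower_pow, !Rpower_mult, <- Rpower_plus by apply Rpower_gt0.
  f_equal; simpl; field.
Qed.

Lemma RInt_S4_bounded kappa a T : (1 <= kappa)%nat -> 0 < T ->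
  RInt_bounded (S4 kappa a T) T (2 * T)
    (/ 8 * ((INR (2 * kappa - 1) + 5) / (4 * PI) *
            ((2 * T) ^ (2 * kappa - 1) * sqrt (2 * T)) *
            sum_le (ycut T) (cusp_weight kappa a) ^ 4)).
Proof.
  intros Hk HT.
  set (N := (2 * kappa - 1)%nat); set (y := ycut T); set (w := cusp_weight kappa a).
  assert (Hsum : RInt_bounded
    (fun x => sum_le y (fun n => sum_le y (fun m => sum_le y (fun k => sum_le y (fun l =>
       gcoef kappa a n m k l * x ^ N *
       cos (4 * PI * (sqrt (INR n) + sqrt (INR m) + sqrt (INR k) + sqrt (INR l)) * sqrt x - PI))))))
    T (2 * T)
    (sum_le y (fun n => sum_le y (fun m => sum_le y (fun k => sum_le y (fun l =>
       (INR N + 5) / (4 * PI) * ((2 * T) ^ N * sqrt (2 * T)) * (w n * w m * w k * w l))))))).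
  { do 4 (apply RInt_bounded_sum_le; intros ? ? _).
    apply RInt_S4_term_bounded; auto; lia. }
  rewrite sum_le_pow4 in Hsum.
  apply (RInt_bounded_scal (/ 8)) in Hsum.
  rewrite Rabs_pos_eq in Hsum by lra.
  exact Hsum.
Qed.

Lemma sum_le_cusp_weight_le kappa a C d y : 0 < d -> 0 <= C ->
  (forall n, (1 <= n)%nat -> Rabs (a n) <= C * Rpower (INR n) ((INR kappa - 1) / 2) * INR (ndiv n)) ->
  sum_le y (cusp_weight kappa a) <= C * (1 + / d) ^ 2 * Rpower y (1 / 8 + d).
Proof.
  intros Hd HC Hdel.
  eapply Rle_trans;
    [apply sum_le_le with (g := fun n => C * (INR (ndiv n) * Rpower (INR n) (- (7 / 8))))|].
  - intros n Hn _; apply cusp_weight_le_ndiv, Hdel, Hn.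
  - rewrite sum_le_scal_l, Rmult_assoc, (Rmult_comm (_ ^ 2)).
    apply Rmult_le_compat_l; [exact HC|].
    replace (1 / 8 + d) with (1 + d - 7 / 8) by lra.
    apply sum_le_ndiv_Rpower_le; lra.
Qed.

(* The hypotheses that [kappa] is even and at least 12 are only used through [kappa >= 1]. *)
Theorem mainTheorem5 (kappa : nat) (a : nat -> R) :
  (12 <= kappa)%nat -> Nat.even kappa = true ->
  deligne_bound kappa a ->
  forall eps : R, 0 < eps ->
  exists C : R, forall T : R, 10 <= T ->
    exists pr : Riemann_integrable (S4 kappa a T) T (2 * T),
      Rabs (RiemannInt pr) <=
        C * (Rpower T (2 * INR kappa - 1 / 2 + eps) * Rpower (ycut T) (1 / 2)).
Proof.
  intros Hk _ [C [HC Hdel]] eps Heps.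
  set (N := (2 * kappa - 1)%nat); set (d := eps / 3); set (Z := C * (1 + / d) ^ 2).
  set (K := (INR N + 5) / (4 * PI) * (2 ^ N * sqrt 2)).
  exists (/ 8 * K * Z ^ 4).
  intros T HT; set (y := ycut T); set (W := sum_le y (cusp_weight kappa a)).
  destruct (RInt_S4_bounded kappa a T) as [Hex Hle]; [lia | lra |].
  exists (ex_RInt_Reals_0 _ _ _ Hex); rewrite <- RInt_Reals.
  eapply Rle_trans; [exact Hle|]; fold N y W.
  assert (HW4 : W ^ 4 <= Z ^ 4 * (Rpower y (1 / 2) * Rpower T eps)).
  { replace eps with (3 * d) by (unfold d; field).
    unfold y; rewrite <- ycut_Rpower_pow4, <- Rpow_mult_distr by lra.
    apply pow_incr; split; [apply sum_le_ge0; intros; apply cusp_weight_ge0|].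
    apply sum_le_cusp_weight_le; unfold d; lra || assumption. }
  replace (2 * INR kappa - 1 / 2 + eps) with (INR N + 1 / 2 + eps)
    by (unfold N; rewrite minus_INR, mult_INR by lia; simpl; field).
  rewrite Rpower_pow_sqrt, sqrt_mult, Rpow_mult_distr by lra.
  set (X := (INR N + 5) / (4 * PI) * (2 ^ N * sqrt 2 * (T ^ N * sqrt T))).
  assert (HX : 0 <= X).
  { pose proof (pos_INR N); pose proof PI_RGT_0; pose proof (sqrt_pos 2); pose proof (sqrt_pos T).
    assert (0 <= 2 ^ N) by (apply pow_le; lra); assert (0 <= T ^ N) by (apply pow_le; lra).
    apply Rmult_le_pos; [apply Rdiv_le_0_compat | repeat apply Rmult_le_pos]; lra. }
  replace ((INR N + 5) / (4 * PI) * (2 ^ N * T ^ N * (sqrt 2 * sqrt T))) with X by (unfold X; ring).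
  apply Rle_trans with (/ 8 * (X * (Z ^ 4 * (Rpower y (1 / 2) * Rpower T eps)))).
  - apply Rmult_le_compat_l, Rmult_le_compat_l; [lra | exact HX | exact HW4].
  - right; unfold X, K; ring.
Qed.
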